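(* Let $K$ be any real number field and let $a,b$ be arbitrary nonzero elements of $K$ with $a>0$. Then there exist a generator $g\neq 1$ of $K$ (i.e. $\mathbb{Q}(g)=K$) and $m_1,m_2,m_3,m_4,m_5\in K$ with $m_2\neq m_3$ such that $$\frac{1}{a}\left(\frac{m_1}{m_2-m_3}\right)^2 - \frac{b}{a}\left(\frac{m_4}{m_2-m_3}\right)^2 + b\left(\frac{m_5}{m_2-m_3}\right)^2 = 1 + \frac{2}{g-1}.$$
   Context: A real number field is a field $K\subset\mathbb{R}$ with $[K:\mathbb{Q}]<\infty$. *)

From HB Require Import structures.
From mathcomp Require Import all_boot all_order all_algebra.
From mathcomp Require Import reals.
Set Implicit Arguments. Unset Strict Implicit. Unset Printing Implicit Defensive.
Import Order.TTheory GRing.Theory Num.Theory.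
Local Open Scope ring_scope.

Definition is_subfield (R : realType) (K : R -> Prop) : Prop :=
  K 0 /\ K 1 /\
  (forall x y, K x -> K y -> K (x + y)) /\
  (forall x, K x -> K (- x)) /\
  (forall x y, K x -> K y -> K (x * y)) /\
  (forall x, K x -> x != 0 -> K (x^-1)).

(* K has finite degree over Q: K is spanned over Q by finitely many elements. *)
Definition finite_over_Q (R : realType) (K : R -> Prop) : Prop :=
  exists s : seq R, forall x, K x <->
    exists c : seq rat, size c = size s /\
      x = \sum_(i < size s) ratr (nth 0 c i) * nth 0 s i.

Definition real_number_field (R : realType) (K : R -> Prop) : Prop :=
  is_subfield K /\ finite_over_Q K.

(* Q(g): the smallest subfield of R containing g. *)
Definition Qadj (R : realType) (g : R) : R -> Prop :=
  fun x => forall F : R -> Prop, is_subfield F -> F g -> F x.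

Definition generates (R : realType) (K : R -> Prop) (g : R) : Prop :=
  forall x, K x <-> Qadj g x.

(* Every real number field K has a primitive element g0, and completing the
   square in a suitable t g0^2 - g0 yields p in K with Q(p^2) = K.  Two further
   applications of the primitive element theorem, with the rational multiplier
   chosen among the infinitely many admissible ones to be a perfect square, make
   c := m1^2 a p^2 - b/a + m2^2 b a generator of K (it recovers b/a and a p^2,
   hence a and p^2).  This c is (1/a) (m1 a p)^2 - (b/a) 1^2 + b m2^2, i.e. the
   required expression with m2 - m3 = 1, and c = 1 + 2/(g - 1) for the generator
   g = (c + 1)/(c - 1). *)

From HB Require Import structures.
From mathcomp Require Import all_boot all_order all_algebra all_field.
From mathcomp Require Import reals polyorder ring.
Import Order.TTheory GRing.Theory Num.Theory.
Local Open Scope ring_scope.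

Set Implicit Arguments.
Unset Strict Implicit.
Unset Printing Implicit Defensive.

Local Notation "p ^ f" := (map_poly f p) : ring_scope.

Lemma algebraic_of_powers_span (F : numFieldType) (s : seq F) (x : F) :
    (forall i, exists c : seq rat, x ^+ i = \sum_(j < size s) ratr c`_j * s`_j) ->
  algebraicOver ratr x.
Proof.
set n := size s => span.
have {}span i : exists c : seq rat, x ^+ i == \sum_(j < n) ratr c`_j * s`_j.
  by have [c ->] := span i; exists c.
pose c i := xchoose (span i); have cP i := eqP (xchooseP (span i)).
pose M : 'M[rat]_(n.+1, n) := \matrix_(i, j) (c i)`_j.
have [v /sub_kermxP vM nz_v] : exists2 v : 'rV_n.+1, (v <= kermx M)%MS & v != 0.
  by apply/rowV0Pn; rewrite kermx_eq0 /row_free ltn_eqF // ltnS rank_leq_col.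
exists (rVpoly v); first by apply: contraNneq nz_v => v0; rewrite -(rVpolyK v) v0 linear0.
rewrite /root (@horner_coef_wide _ n.+1); last by rewrite size_map_poly size_poly.
under eq_bigr => k _ do rewrite coef_map coef_rVpoly_ord cP mulr_sumr.
rewrite exchange_big big1 //= => j _.
under eq_bigr => k _ do rewrite mulrA -rmorphM.
rewrite -mulr_suml -rmorph_sum.
suff -> : \sum_(k < n.+1) v 0 k * (c k)`_j = 0 by rewrite rmorph0 mul0r.
have := congr1 (fun A : 'rV_n => A 0 j) vM; rewrite !mxE => vMj.
by rewrite -[RHS]vMj; apply: eq_bigr => k _; rewrite mxE.
Qed.

Lemma algebraic_separable_root (F : realFieldType) (L : fieldType)
    (iota : {rmorphism F -> L}) (y : L) :
  algebraicOver iota y -> exists2 q : {poly F}, separable_poly q & root (q ^ iota) y.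
Proof.
case=> q0 nz_q0 q0y; suff main n (q : {poly F}) : (size q <= n)%N -> q != 0 ->
    root (q ^ iota) y -> exists2 q : {poly F}, separable_poly q & root (q ^ iota) y.
  exact: main q0 (leqnn _) nz_q0 q0y.
elim: n q => [|n IHn] q le_q_n nz_q qy.
  by rewrite leqn0 size_poly_eq0 (negPf nz_q) in le_q_n.
have [sep_q | ] := boolP (coprimep q q^`()); first by exists q => //; rewrite unlock.
rewrite coprimep_def; set g := gcdp q q^`() => g_neq1.
have nz_g : g != 0 by rewrite gcdp_eq0 (negPf nz_q).
have g_gt1 : (1 < size g)%N by rewrite ltn_neqAle eq_sym g_neq1 size_poly_gt0.
(* y is a root of g or of q %/ g, both smaller than q since q^`() != 0 in characteristic 0. *)
have [gy | g'y] := boolP (root (g ^ iota) y).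
  have nz_q' : q^`() != 0.
    rewrite -size_poly_eq0 size_deriv -lt0n -ltnS prednK ?size_poly_gt0 //.
    exact: leq_trans g_gt1 (leq_gcdpl _ nz_q).
  have le_g_n : (size g <= n)%N.
    rewrite -ltnS (leq_trans _ le_q_n) //.
    exact: leq_ltn_trans (leq_gcdpr _ nz_q') (lt_size_deriv nz_q).
  exact: IHn le_g_n nz_g gy.
pose r := q %/ g; have Dq : r * g = q by rewrite divpK // dvdp_gcdl.
have nz_r : r != 0 by apply: contra_neq nz_q => r0; rewrite -Dq r0 mul0r.
have le_r_n : (size r <= n)%N.
  rewrite size_divp // -ltnS (leq_trans _ le_q_n) //.
  by rewrite ltn_subrL size_poly_gt0 nz_q andbT -subn1 subn_gt0.
apply: IHn le_r_n nz_r _.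
by move: qy; rewrite -Dq rmorphM rootM (negPf g'y) orbF.
Qed.

Lemma exists_nonroot_square (L : numFieldType) (r : {poly L}) :
  r != 0 -> exists m : nat, ~~ root r (m ^ 2)%:R.
Proof.
move=> nz_r; pose squares := mkseq (fun m => (m ^ 2)%:R : L) (size r).
have uniq_squares : uniq_roots squares.
  by rewrite uniq_rootsE mkseq_uniq // => m n /eqP; rewrite eqr_nat eqn_sqr => /eqP.
have /allPn[_ /mapP[m _ ->] r'm] : ~~ all (root r) squares.
  by apply/negP => /(max_ring_poly_roots nz_r)/(_ uniq_squares); rewrite size_mkseq ltnn.
by exists m.
Qed.

Lemma square_PET (L : numFieldType) (x y z : L) :
    algebraicOver ratr x -> algebraicOver ratr y ->
  exists m : nat, let t := (m ^ 2)%:R in [/\ t != z,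
    exists p : {poly rat}, (p ^ ratr).[t * y - x] = x &
    exists q : {poly rat}, (q ^ ratr).[t * y - x] = y].
Proof.
case=> p nz_p px /algebraic_separable_root[q sep_q qy].
have [r nz_r PETxy] := large_field_PET nz_p px qy sep_q.
have [m] := exists_nonroot_square (mulf_neq0 nz_r (monic_neq0 (monicXsubC z))).
rewrite rootM root_XsubC negb_or => /andP[r'm m_neq_z].
have := PETxy (m ^ 2)%:R; rewrite rmorph_nat => /(_ r'm)[Qx Qy].
by exists m.
Qed.

Section Subfield.
Variables (R : realType) (K : R -> Prop).
Hypothesis sK : is_subfield K.

Lemma subfield0 : K 0. Proof. by case: sK. Qed.
Lemma subfield1 : K 1. Proof. by case: sK => _ []. Qed.
Lemma subfieldD x y : K x -> K y -> K (x + y).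
Proof. by case: sK => _ [_ [KD _]]; apply: KD. Qed.
Lemma subfieldN x : K x -> K (- x).
Proof. by case: sK => _ [_ [_ [KN _]]]; apply: KN. Qed.
Lemma subfieldM x y : K x -> K y -> K (x * y).
Proof. by case: sK => _ [_ [_ [_ [KM _]]]]; apply: KM. Qed.
Lemma subfieldV x : K x -> K x^-1.
Proof.
case: sK => _ [_ [_ [_ [_ KV]]]] Kx.
by have [->|/(KV _ Kx)//] := eqVneq x 0; rewrite invr0; apply: subfield0.
Qed.

Lemma subfieldB x y : K x -> K y -> K (x - y).
Proof. by move=> Kx Ky; apply/subfieldD/subfieldN. Qed.
Lemma subfield_div x y : K x -> K y -> K (x / y).
Proof. by move=> Kx Ky; apply/subfieldM/subfieldV. Qed.
Lemma subfieldX x n : K x -> K (x ^+ n).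
Proof.
by move=> Kx; elim: n => [|n IHn]; rewrite ?expr0 ?exprS; [apply: subfield1 | apply: subfieldM].
Qed.
Lemma subfield_nat n : K n%:R.
Proof.
elim: n => [|n IHn]; first exact: subfield0.
by rewrite -addn1 natrD; apply: subfieldD IHn subfield1.
Qed.
Lemma subfield_rat r : K (ratr r).
Proof.
have Kint (z : int) : K z%:~R.
  by case: z => n; rewrite ?NegzE ?mulrNz; [|apply: subfieldN]; apply: subfield_nat.
exact: subfield_div.
Qed.
Lemma subfield_horner (q : {poly rat}) x : K x -> K (q ^ ratr).[x].
Proof.
move=> Kx; elim/poly_ind: q => [|q c IHq]; first by rewrite rmorph0 horner0; apply: subfield0.
rewrite rmorphD rmorphM /= map_polyX map_polyC hornerMXaddC.
exact/subfieldD/subfield_rat/subfieldM.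
Qed.
Lemma subfield_sum n (f : 'I_n -> R) : (forall i, K (f i)) -> K (\sum_(i < n) f i).
Proof. by move=> Kf; elim/big_ind: _ => //; [apply: subfield0 | apply: subfieldD]. Qed.

End Subfield.

Section Adjunction.
Variable R : realType.
Implicit Types g x y z : R.

Lemma Qadj_subfield g : is_subfield (Qadj g).
Proof.
split; first by move=> F sF _; apply: subfield0.
split; first by move=> F sF _; apply: subfield1.
split; first by move=> x y Qx Qy F sF Fg; apply: subfieldD (Qx F sF Fg) (Qy F sF Fg).
split; first by move=> x Qx F sF Fg; apply: subfieldN (Qx F sF Fg).
split; first by move=> x y Qx Qy F sF Fg; apply: subfieldM (Qx F sF Fg) (Qy F sF Fg).
by move=> x Qx _ F sF Fg; apply: subfieldV (Qx F sF Fg).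
Qed.

Lemma Qadj_id g : Qadj g g. Proof. by []. Qed.

Lemma Qadj_trans x y z : Qadj x y -> Qadj y z -> Qadj x z.
Proof. by move=> Qxy Qyz F sF Fx; apply: Qyz (Qxy F sF Fx). Qed.

Lemma Qadj_horner (q : {poly rat}) x : Qadj x (q ^ ratr).[x].
Proof. by move=> F sF Fx; apply: subfield_horner. Qed.

Lemma subfield_Qadj (K : R -> Prop) g x : is_subfield K -> K g -> Qadj g x -> K x.
Proof. by move=> sK Kg; apply. Qed.

End Adjunction.

Arguments Qadj_id {R} g.

Section Generators.
Variables (R : realType) (K : R -> Prop).
Hypothesis sK : is_subfield K.

Lemma generatesP g : K g -> (forall x, K x -> Qadj g x) -> generates K g.
Proof. by move=> Kg QK x; split=> [/QK // | /(subfield_Qadj sK Kg)]. Qed.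

Lemma generates_Qadj g h : generates K g -> Qadj g h -> Qadj h g -> generates K h.
Proof.
move=> genK Qgh Qhg x; rewrite genK.
by split=> [/(Qadj_trans Qhg) | /(Qadj_trans Qgh)].
Qed.

Lemma moebius_generator c : generates K c -> c != 1 ->
  exists g, [/\ generates K g, g != 1 & c = 1 + 2 / (g - 1)].
Proof.
move=> genK c_neq1; have c1_neq0 : c - 1 != 0 by rewrite subr_eq0.
pose g := (c + 1) / (c - 1).
have g1E : g - 1 = 2 / (c - 1) by rewrite /g; field.
have g1_neq0 : g - 1 != 0 by rewrite g1E mulf_neq0 ?invr_eq0 ?pnatr_eq0.
have cE : c = 1 + 2 / (g - 1) by rewrite g1E; field.
exists g; split; last exact: cE; last by rewrite -subr_eq0.
have [Qc Qg] := (Qadj_subfield c, Qadj_subfield g).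
apply: (generates_Qadj genK).
  exact (subfield_div Qc (subfieldD Qc (Qadj_id c) (subfield1 Qc))
                         (subfieldB Qc (Qadj_id c) (subfield1 Qc))).
rewrite [X in Qadj _ X]cE.
exact (subfieldD Qg (subfield1 Qg)
         (subfield_div Qg (subfield_nat Qg 2) (subfieldB Qg (Qadj_id g) (subfield1 Qg)))).
Qed.

End Generators.

Section AlgebraicSubfield.
Variables (R : realType) (K : R -> Prop).
Hypotheses (sK : is_subfield K) (algK : forall x, K x -> algebraicOver ratr x).

Lemma Qadj_square_PET (x y z : R) : K x -> K y ->
  exists m : nat, let t := (m ^ 2)%:R in
    [/\ t != z, K (t * y - x), Qadj (t * y - x) x & Qadj (t * y - x) y].
Proof.
move=> Kx Ky; have [m [t_neq_z [p Dx] [q Dy]]] := square_PET z (algK Kx) (algK Ky).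
exists m; split=> //; last by rewrite -[X in Qadj _ X]Dy; apply: Qadj_horner.
  apply: (subfieldB sK) Kx; apply: (subfieldM sK) Ky; exact: subfield_nat.
by rewrite -[X in Qadj _ X]Dx; apply: Qadj_horner.
Qed.

Lemma subfield_primitive_seq (l : seq R) : (forall y, y \in l -> K y) ->
  exists2 g, K g & forall y, y \in l -> Qadj g y.
Proof.
elim: l => [|y l IHl] Kl; first by exists 0 => //; apply: subfield0.
have [g Kg Qg] : exists2 g, K g & forall w, w \in l -> Qadj g w.
  by apply: IHl => w lw; apply: Kl; rewrite inE lw orbT.
have [m [_ Kh Qhg Qhy]] := Qadj_square_PET 0 Kg (Kl y (mem_head y l)).
exists ((m ^ 2)%:R * y - g) => // w; rewrite inE => /predU1P[-> // | lw].
exact: Qadj_trans Qhg (Qg w lw).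
Qed.

Lemma square_generator g : K g -> exists2 p, K p & Qadj (p ^+ 2) g.
Proof.
move=> Kg; have [m [t_neq0 _ Qg _]] := Qadj_square_PET 0 Kg (subfieldX sK 2 Kg).
set t := (m ^ 2)%:R in t_neq0 Qg; pose p := g - (2 * t)^-1.
have Kp : K p by apply/(subfieldB sK Kg)/(subfieldV sK)/(subfieldM sK); apply: subfield_nat.
exists p => //; apply: (Qadj_trans _ Qg).
have -> : t * g ^+ 2 - g = t * p ^+ 2 - (4 * t)^-1.
  by rewrite /p; field; move: t_neq0; rewrite !pnatr_eq0 expn_eq0 andbT.
have Qp := Qadj_subfield (p ^+ 2).
exact (subfieldB Qp (subfieldM Qp (subfield_nat Qp _) (Qadj_id _))
         (subfieldV Qp (subfieldM Qp (subfield_nat Qp 4) (subfield_nat Qp _)))).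
Qed.

End AlgebraicSubfield.

Section RealNumberField.
Variables (R : realType) (K : R -> Prop).
Hypothesis hK : real_number_field K.

Lemma real_number_field_algebraic x : K x -> algebraicOver ratr x.
Proof.
case: hK => sK [s span] Kx; apply: (@algebraic_of_powers_span _ s) => i.
by have [c [_ ->]] := (span (x ^+ i)).1 (subfieldX sK i Kx); exists c.
Qed.

Lemma real_number_field_primitive : exists2 g, K g & forall x, K x -> Qadj g x.
Proof.
case: (hK) => sK [s span].
have Ks y : y \in s -> K y.
  move=> sy; apply/span; pose i := index y s.
  exists (mkseq (fun j => (j == i)%:R) (size s)); split; first by rewrite size_mkseq.
  have lt_i : (i < size s)%N by rewrite index_mem.
  rewrite (bigD1 (Ordinal lt_i)) //= big1 ?addr0 => [|j ji].
    by rewrite nth_mkseq // eqxx rmorph1 mul1r nth_index.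
  have /negPf j'i : nat_of_ord j != i by apply: contra_neq ji => eji; apply: val_inj.
  by rewrite nth_mkseq // j'i rmorph0 mul0r.
have [g Kg Qg] := subfield_primitive_seq sK real_number_field_algebraic Ks.
exists g => // x /span[c [_ ->]]; have Qs := Qadj_subfield g.
exact (subfield_sum Qs (fun i => subfieldM Qs (subfield_rat Qs _) (Qg _ (mem_nth 0 (ltn_ord i))))).
Qed.

Lemma norm_form_generator (a b p : R) : K a -> K b -> K p -> a != 0 -> b != 0 ->
    (forall x, K x -> Qadj (p ^+ 2) x) ->
  exists m1 m2 : nat,
    let c := (m1 ^ 2)%:R * (a * p ^+ 2) - b / a + (m2 ^ 2)%:R * b in
    generates K c /\ c != 1.
Proof.
move=> Ka Kb Kp a_neq0 b_neq0 genK; have [sK _] := hK.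
have algK := real_number_field_algebraic.
have Ke := subfieldM sK Ka (subfieldX sK 2 Kp).
have [m1 [_ Kw Qw_ba Qw_e]] := Qadj_square_PET sK algK 0 (subfield_div sK Kb Ka) Ke.
set w := _ - _ in Kw Qw_ba Qw_e.
have [m2 [t_neq Kc Qc_w Qc_b]] := Qadj_square_PET sK algK ((1 - w) / b) (subfieldN sK Kw) Kb.
set c := _ * b - - w in t_neq Kc Qc_w Qc_b.
exists m1, m2; rewrite /= -/w (_ : w + _ = c); last by rewrite /c opprK addrC.
split; last first.
  by apply: contra_neq t_neq => c1; rewrite -[X in (X - w)]c1 /c opprK addrK mulfK.
apply: (generatesP sK Kc) => x Kx; have Qc := Qadj_subfield c.
have Qc_w' : Qadj c w by rewrite -[w]opprK; exact (subfieldN Qc Qc_w).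
have Qc_a : Qadj c a.
  rewrite -[a](divKf b_neq0); exact (subfield_div Qc Qc_b (Qadj_trans Qc_w' Qw_ba)).
have Qc_p : Qadj c (p ^+ 2).
  rewrite -[p ^+ 2](mulKf a_neq0).
  exact (subfieldM Qc (subfieldV Qc Qc_a) (Qadj_trans Qc_w' Qw_e)).
exact (Qadj_trans Qc_p (genK x Kx)).
Qed.

End RealNumberField.

Unset Implicit Arguments.

Theorem lemma3p3 (R : realType) (K : R -> Prop) (hK : real_number_field K)
  (a b : R) (Ka : K a) (Kb : K b) (a0 : a != 0) (b0 : b != 0) (apos : 0 < a) :
  exists g m1 m2 m3 m4 m5 : R,
    [/\ generates K g, g != 1,
        [/\ K m1, K m2, K m3, K m4 & K m5], m2 != m3 &
        a^-1 * (m1 / (m2 - m3)) ^+ 2 - b / a * (m4 / (m2 - m3)) ^+ 2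
          + b * (m5 / (m2 - m3)) ^+ 2 = 1 + 2 / (g - 1)].
Proof.
have [sK _] := hK.
have [g0 Kg0 genK] := real_number_field_primitive hK.
have [p Kp Qp] := square_generator sK (real_number_field_algebraic hK) Kg0.
have [m1 [m2 [genc c_neq1]]] :=
  norm_form_generator hK Ka Kb Kp a0 b0 (fun x Kx => Qadj_trans Qp (genK x Kx)).
have [g [gen_g g_neq1 cE]] := moebius_generator genc c_neq1.
have Knat n := subfield_nat sK n.
exists g, (m1%:R * a * p), 1, 0, 1, m2%:R; split=> //.
- split; first exact (subfieldM sK (subfieldM sK (Knat m1) Ka) Kp).
  + exact (subfield1 sK).
  + exact (subfield0 sK).
  + exact (subfield1 sK).
  + exact (Knat m2).
- exact: oner_neq0.
- by rewrite -cE subr0 !divr1 !natrX; field.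
Qed.
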